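(* Let $K$ be an alphabet space and $\sigma:K\to K^+$ a primitive generalized substitution. For every $\mathbf z\in X_\sigma$ and every $k\in\mathbb N$, the sequence $\mathbf z$ is a concatenation of $\sigma^k$-words, and $\mathbf z=S^i\sigma^k(\mathbf y)$ for some $i\ge0$ and some $\mathbf y\in X_\sigma$.
   Context: An alphabet space is a compact zero-dimensional metric space $K$ with at least two points; $K^+$ the nonempty finite words. A generalized substitution is a map $\sigma:K\to K^+$ with $a\mapsto|\sigma(a)|$ continuous and, for each $j$, $a\mapsto$ ($j$-th letter of $\sigma(a)$) continuous on $\{a:|\sigma(a)|\ge j\}$; it is extended to words by concatenation (and iterated) and to $K^{\mathbb Z}$ by concatenating the images with the image of $x_0$ starting at coordinate $0$. $\sigma$ is primitive if for every nonempty open $V\subset K$ there is $j$ such that for all $a$ and $k\ge j$ some letter of $\sigma^k(a)$ is in $V$. $\mathcal L(\sigma)$ is the set of words that are subwords of some $\sigma^j(a)$ or limits in $K^n$ of such words; $X_\sigma=\{\mathbf y\in K^{\mathbb Z}:\mathbf y[-n,n]\in\mathcal L(\sigma)\ \forall n\ge0\}$; $S$ is the shift $S(\mathbf y)_i=y_{i+1}$. A $\sigma^k$-word is a word $\sigma^k(a)$, $a\in K$; $\mathbf z$ is a concatenation of $\sigma^k$-words if there is a strictly increasing bi-infinite sequence of integers $(m_l)_{l\in\mathbb Z}$ with each $\mathbf z[m_l,m_{l+1}-1]$ a $\sigma^k$-word. *)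

From HB Require Import structures.
From mathcomp Require Import all_boot all_order all_algebra.
From mathcomp Require Import all_classical all_reals all_analysis.
Set Implicit Arguments. Unset Strict Implicit. Unset Printing Implicit Defensive.
Import Order.TTheory GRing.Theory Num.Theory.
Local Open Scope classical_set_scope.
Local Open Scope ring_scope.

Definition clopen_base (T : topologicalType) : Prop :=
  forall (x : T) (U : set T), nbhs x U ->
    exists V : set T, [/\ clopen V, V x & V `<=` U].

Definition alphabet_space {R : realType} (K : metricType R) : Prop :=
  [/\ compact [set: K], clopen_base K & exists a b : K, a != b].

Definition subst_word {K : Type} (sigma : K -> seq K) (w : seq K) : seq K :=
  flatten (map sigma w).

Definition subst_iter {K : Type} (sigma : K -> seq K) (k : nat) (a : K) : seq K :=
  iter k (subst_word sigma) [:: a].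

(** Generalized substitution. Continuity of a |-> |sigma a| into the discrete
    space nat is written as local constancy; letters are 0-indexed. *)
Definition gen_subst {R : realType} {K : metricType R} (sigma : K -> seq K) : Prop :=
  [/\ (forall a, 0 < size (sigma a))%N,
      (forall a : K, \forall b \near a, size (sigma b) = size (sigma a)) &
      (forall j : nat,
         {within [set a | (j < size (sigma a))%N],
            continuous (fun a => nth a (sigma a) j)})].

Definition primitive {R : realType} {K : metricType R} (sigma : K -> seq K) : Prop :=
  forall V : set K, open V -> V !=set0 ->
    exists j : nat, forall (a : K) (k : nat), (j <= k)%N ->
      exists b, b \in subst_iter sigma k a /\ V b.

(** The language L(sigma): subwords of the sigma^j(a), together with their
    limits in K^n (product topology on K^n, written metrically). *)
Definition language {R : realType} {K : metricType R} (sigma : K -> seq K)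
    (w : seq K) : Prop :=
  forall e : R, 0 < e ->
    exists (j : nat) (a : K) (u : seq K),
      [/\ infix u (subst_iter sigma j a), size u = size w &
          forall i, (i < size w)%N -> ball (nth a w i) e (nth a u i)].

Definition window {K : Type} (z : int -> K) (m : int) (len : nat) : seq K :=
  [seq z (m + i%:Z) | i <- iota 0 len].

Definition subshift {R : realType} {K : metricType R} (sigma : K -> seq K)
    (y : int -> K) : Prop :=
  forall n : nat, language sigma (window y (- n%:Z) (2 * n).+1).

Definition zshift {K : Type} (y : int -> K) : int -> K := fun i => y (i + 1).

(** Starting positions of the blocks tau(y_l) when tau is applied to y with
    the image of y_0 starting at coordinate 0. *)
Definition block_pos {K : Type} (tau : K -> seq K) (y : int -> K) (l : int) : int :=
  match l with
  | Posz n => (\sum_(0 <= t < n) size (tau (y t%:Z)))%:Z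
  | Negz n => - (\sum_(1 <= t < n.+2) size (tau (y (- t%:Z))))%:Z
  end.

Definition subst_seq {K : Type} (tau : K -> seq K) (y z : int -> K) : Prop :=
  forall (l : int) (j : nat), (j < size (tau (y l)))%N ->
    z (block_pos tau y l + j%:Z) = nth (y l) (tau (y l)) j.

Definition concat_of_words {K : Type} (sigma : K -> seq K) (k : nat)
    (z : int -> K) : Prop :=
  exists m : int -> int, (forall l : int, m l < m (l + 1)) /\
    forall l : int, exists a : K,
      window z (m l) (absz (m (l + 1) - m l)%R) = subst_iter sigma k a.

From HB Require Import structures.
From mathcomp Require Import all_boot all_order all_algebra.
From mathcomp Require Import all_classical all_reals all_analysis.
From mathcomp Require Import zify.
Set Implicit Arguments. Unset Strict Implicit. Unset Printing Implicit Defensive.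
Import Order.TTheory GRing.Theory Num.Theory ArrowAsProduct.
Local Open Scope classical_set_scope.
Local Open Scope ring_scope.

(* The words sigma^k(a) have bounded length M, by compactness of K and local
   constancy of a |-> |sigma^k(a)|.  By primitivity every window of z is
   approximated by a subword of some sigma^j(a) with j >= k, that is, of
   sigma^k(b) for the word b = sigma^(j-k)(a).  Recentring b at the block that
   covers the middle of a window of length 2(N+2)M+1 gives a point y_N whose
   windows lie in L(sigma) and with S^i sigma^k(y_N) within 1/(N+1) of z on
   the blocks of index at most N, for some offset i < M.  One offset i serves
   every N; a cluster point y of the y_N in the compact space K^Z then
   satisfies S^i sigma^k(y) = z, and the block boundaries of sigma^k(y) cut z
   into sigma^k-words. *)

Section SeqBall.
Context {R : realType} {K : metricType R}.

Fixpoint seq_ball (u : seq K) (e : R) (v : seq K) : Prop :=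
  match u, v with
  | [::], [::] => True
  | a :: u', b :: v' => ball a e b /\ seq_ball u' e v'
  | _, _ => False
  end.

Lemma seq_ball_size u e v : seq_ball u e v -> size u = size v.
Proof. by elim: u v => [|a u IH] [|b v] //= [_ /IH ->]. Qed.

Lemma seq_ballP u e v : seq_ball u e v <->
  size u = size v /\ forall i x0 y0, (i < size u)%N -> ball (nth x0 u i) e (nth y0 v i).
Proof.
elim: u v => [|a u IH] [|b v] //=; split => //; try by case.
- by move=> [ab /IH [-> H]]; split => // -[|i] x0 y0 //= Hi; exact: H.
- move=> [[sz] H]; split; first exact: H 0%N a b isT.
  by apply/IH; split => // i x0 y0; exact: H i.+1 x0 y0.
Qed.

Lemma seq_ball_cat u1 u2 e v1 v2 : seq_ball u1 e v1 -> seq_ball u2 e v2 ->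
  seq_ball (u1 ++ u2) e (v1 ++ v2).
Proof. by elim: u1 v1 => [|a u IH] [|b v] //= [? /IH H] /H. Qed.

Lemma le_seq_ball u e e' v : e <= e' -> seq_ball u e v -> seq_ball u e' v.
Proof.
move=> ee'; elim: u v => [|a u IH] [|b v] //= [ab /IH]; split => //.
exact: le_ball ab.
Qed.

Lemma seq_ball_triangle u v w e1 e2 :
  seq_ball u e1 v -> seq_ball v e2 w -> seq_ball u (e1 + e2) w.
Proof.
elim: u v w => [|a u IH] [|b v] [|c w] //= [ab uv] [bc vw].
by split; [exact: ball_triangle ab bc | exact: IH uv vw].
Qed.

Lemma seq_ballxx u e : 0 < e -> seq_ball u e u.
Proof. by move=> e0; elim: u => //= a u IH; split => //; exact: ballxx. Qed.

Lemma seq_ball_catl u1 u2 e v : seq_ball (u1 ++ u2) e v ->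
  exists v1 v2, [/\ v = v1 ++ v2, seq_ball u1 e v1 & seq_ball u2 e v2].
Proof.
elim: u1 v => [|a u IH] v /=; first by exists [::], v.
case: v => // b v [ab /IH [v1 [v2 [-> H1 H2]]]].
by exists (b :: v1), v2.
Qed.

Lemma seq_ball_infix s e t u : seq_ball s e t -> infix u s ->
  exists2 u', infix u' t & seq_ball u e u'.
Proof.
move=> st /infixP [s1 [s2 def]]; move: st; rewrite def.
move=> /seq_ball_catl [t1 [t' [-> _ /seq_ball_catl [t2 [t3 [-> H _]]]]]].
by exists t2 => //; exact: infix_infix.
Qed.

End SeqBall.

Lemma near_forall_ltn {T : Type} (F : set_system T) {FF : Filter F} (n : nat)
    (P : nat -> T -> Prop) :
  (forall j, (j < n)%N -> \forall x \near F, P j x) ->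
  \forall x \near F, forall j, (j < n)%N -> P j x.
Proof.
move=> H.
have Hn := @filter_forall T 'I_n (fun j x => P j x) F FF (fun j => H j (ltn_ord j)).
by apply: filterS Hn => x Hx j jn; exact: Hx (Ordinal jn).
Qed.

Section SubstIter.
Context {K : Type} (s : K -> seq K).

Lemma subst_word_cat u v : subst_word s (u ++ v) = subst_word s u ++ subst_word s v.
Proof. by rewrite /subst_word map_cat flatten_cat. Qed.

Lemma iter_subst_word_flatten k w :
  iter k (subst_word s) w = flatten (map (subst_iter s k) w).
Proof.
have iter_cat u v : iter k (subst_word s) (u ++ v) =
    iter k (subst_word s) u ++ iter k (subst_word s) v.
  by elim: k {w} => //= k ->; rewrite subst_word_cat.
elim: w => [|a w IH]; first by elim: k {iter_cat} => //= k ->.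
by rewrite -cat1s iter_cat IH.
Qed.

Lemma subst_iterD k m a :
  subst_iter s (k + m) a = flatten (map (subst_iter s k) (subst_iter s m a)).
Proof. by rewrite /subst_iter iterD iter_subst_word_flatten. Qed.

Lemma subst_iterS k a : subst_iter s k.+1 a = subst_word s (subst_iter s k a).
Proof. by []. Qed.

Lemma size_subst_iter_gt0 k a :
  (forall b, 0 < size (s b))%N -> (0 < size (subst_iter s k a))%N.
Proof.
move=> s_gt0; elim: k a => // k IH a; rewrite subst_iterS.
case: (subst_iter s k a) (IH a) => [|b w] // _.
by rewrite /subst_word /= size_cat; apply: leq_trans (s_gt0 b) (leq_addr _ _).
Qed.

End SubstIter.

Lemma infix_flatten_map {K : eqType} (f : K -> seq K) (w : seq K) b :
  b \in w -> infix (f b) (flatten (map f w)).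
Proof. by case/splitPr => w1 w2; rewrite map_cat flatten_cat; exact: infix_infix. Qed.

Section Continuity.
Context {R : realType} {K : metricType R} (sigma : K -> seq K) (sigma_gs : gen_subst sigma).

Lemma subst_nbhs x e : 0 < e -> \forall y \near x, seq_ball (sigma x) e (sigma y).
Proof.
move=> e0; case: sigma_gs => _ size_near letter_cont.
have letter_near j : (j < size (sigma x))%N ->
    \forall y \near x, ball (nth x (sigma x) j) e (nth y (sigma y) j).
  move=> jx; have oA : open [set a | (j < size (sigma a))%N].
    by rewrite openE => a /= ja; apply: filterS (size_near a) => b /= ->.
  have := letter_cont j; rewrite continuous_open_subspace // => /(_ x).
  by rewrite inE => /(_ jx) /(_ _ (nbhsx_ballx _ _ e0)).
apply: filterS (filterI (size_near x) (near_forall_ltn letter_near)).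
move=> y [sy Hy]; apply/seq_ballP; split => // i x0 y0 ix.
by rewrite (set_nth_default x) // (set_nth_default y y0) ?sy //; exact: Hy.
Qed.

Lemma subst_word_ball w e : 0 < e -> exists2 d, 0 < d &
  forall w', seq_ball w d w' -> seq_ball (subst_word sigma w) e (subst_word sigma w').
Proof.
move=> e0; elim: w => [|a w [d2 d20 IH]]; first by exists 1 => // -[|b w'].
have /nbhs_ballP [d1 d10 H1] := subst_nbhs a e0.
exists (Num.min d1 d2); first by rewrite lt_min d10 d20.
case=> // b w' /= [ab ww]; rewrite /subst_word /= -!/(subst_word _ _).
apply: seq_ball_cat; first by apply: H1; apply: le_ball ab; rewrite ge_min lexx.
by apply: IH; apply: le_seq_ball ww; rewrite ge_min lexx orbT.
Qed.

Lemma subst_iter_ball k a e : 0 < e -> exists2 d, 0 < d &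
  forall b, ball a d b -> seq_ball (subst_iter sigma k a) e (subst_iter sigma k b).
Proof.
elim: k e => [|k IH] e e0; first by exists e => // b ab /=; split.
have [d1 d10 H1] := subst_word_ball (subst_iter sigma k a) e0.
have [d d0 H] := IH d1 d10.
by exists d => // b ab; rewrite !subst_iterS; apply: H1; apply: H.
Qed.

Lemma subst_iter_nbhs k a e : 0 < e ->
  \forall b \near a, seq_ball (subst_iter sigma k a) e (subst_iter sigma k b).
Proof. by move=> e0; have [d d0 H] := subst_iter_ball k a e0; apply/nbhs_ballP; exists d. Qed.

End Continuity.

Lemma compact_nested_cluster {T : topologicalType} (C : nat -> set T) :
  compact [set: T] -> (forall n m, (n <= m)%N -> C m `<=` C n) -> (forall n, C n !=set0) ->
  exists p : T, forall n (B : set T), nbhs p B -> C n `&` B !=set0.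
Proof.
move=> cT decr ne.
have FF : Filter (filter_from [set: nat] C).
  apply: filter_from_filter; first by exists 0%N.
  move=> i j _ _; exists (maxn i j) => // x Cx.
  by split; [apply: decr (leq_maxl i j) _ Cx | apply: decr (leq_maxr i j) _ Cx].
have PF : ProperFilter (filter_from [set: nat] C).
  by apply: filter_from_proper => i _; exact: ne.
have [p [_ cp]] := cT _ PF filterT.
by exists p => n B nB; apply: cp nB; exists n.
Qed.

Lemma subst_iter_size_bounded {R : realType} {K : metricType R} (sigma : K -> seq K) k :
  gen_subst sigma -> compact [set: K] ->
  exists M, forall a, (size (subst_iter sigma k a) <= M)%N.
Proof.
move=> gs cK; apply: contrapT => /forallNP unbounded.
have ne n : [set a | (n <= size (subst_iter sigma k a))%N] !=set0.
  have /existsNP [a Ha] := unbounded n; exists a => /=.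
  by rewrite ltnW // ltnNge; apply/negP.
have [p Hp] := compact_nested_cluster cK (fun n m nm a Ha => leq_trans nm Ha) ne.
have [b [/= Hb /seq_ball_size Eb]] :=
  Hp (size (subst_iter sigma k p)).+1 _ (subst_iter_nbhs gs k p ltr01).
by rewrite Eb ltnn in Hb.
Qed.

Section Language.
Context {R : realType} {K : metricType R} (sigma : K -> seq K).

Lemma languageP w : language sigma w <-> forall e, 0 < e ->
  exists j a u, infix u (subst_iter sigma j a) /\ seq_ball w e u.
Proof.
split=> H e e0.
  have [j [a [u [iu su Hu]]]] := H e e0.
  exists j, a, u; split => //; apply/seq_ballP; split => // i x0 y0 iw.
  by rewrite (set_nth_default a) // (set_nth_default a y0) ?su //; exact: Hu.
have [j [a [u [iu /seq_ballP [su Hu]]]]] := H e e0.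
by exists j, a, u; split => // i iw; exact: Hu.
Qed.

Lemma infix_language j a u : infix u (subst_iter sigma j a) -> language sigma u.
Proof.
by move=> iu; apply/languageP => e e0; exists j, a, u; split => //; exact: seq_ballxx.
Qed.

Lemma language_closed w :
  (forall e, 0 < e -> exists w', language sigma w' /\ seq_ball w e w') -> language sigma w.
Proof.
move=> H; apply/languageP => e e0.
have e20 : 0 < e / 2 by rewrite divr_gt0.
have [w' [/languageP Lw' ww']] := H _ e20.
have [j [a [u [iu wu]]]] := Lw' _ e20.
by exists j, a, u; split => //; rewrite [e]splitr; exact: seq_ball_triangle ww' wu.
Qed.

Context (sigma_gs : gen_subst sigma) (sigma_prim : primitive sigma).

(* Primitivity puts a letter b near [a] into sigma^J(a), so sigma^j(b), a close
   copy of sigma^j(a), is a subword of sigma^(j+J)(a). *)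
Lemma subst_iter_approx_deep j a e m0 : 0 < e -> exists j' a', (m0 <= j')%N /\
  exists2 v, infix v (subst_iter sigma j' a') & seq_ball (subst_iter sigma j a) e v.
Proof.
move=> e0; have [d d0 Hd] := subst_iter_ball sigma_gs j a e0.
have [J HJ] := sigma_prim (@open_interior _ (ball a d)) (ex_intro _ a (nbhsx_ballx _ _ d0)).
have [b [bin Vb]] := HJ a (maxn J m0) (leq_maxl _ _).
exists (j + maxn J m0)%N, a; split; first exact: leq_trans (leq_maxr J m0) (leq_addl _ _).
exists (subst_iter sigma j b); last by apply: Hd; exact: interior_subset.
by rewrite subst_iterD; exact: infix_flatten_map.
Qed.

Lemma language_deep w : language sigma w -> forall e m0, 0 < e ->
  exists j a u, [/\ (m0 <= j)%N, infix u (subst_iter sigma j a) & seq_ball w e u].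
Proof.
move=> /languageP Lw e m0 e0.
have e20 : 0 < e / 2 by rewrite divr_gt0.
have [j [a [u [iu wu]]]] := Lw _ e20.
have [j' [a' [jm [v iv wv]]]] := subst_iter_approx_deep j a m0 e20.
have [u' iu' uu'] := seq_ball_infix wv iu.
exists j', a', u'; split => //; first exact: infix_trans iu' iv.
by rewrite [e]splitr; exact: seq_ball_triangle wu uu'.
Qed.

End Language.

Section BlockPositions.
Context {K : Type} (tau : K -> seq K).

Lemma block_pos0 y : block_pos tau y 0 = 0.
Proof. by rewrite /block_pos /= big_geq. Qed.

Lemma block_posS y l : block_pos tau y (l + 1) = block_pos tau y l + (size (tau (y l)))%:Z.
Proof.
case: l => [n|[|n]].
- have -> : Posz n + 1 = Posz n.+1 by lia.
  by rewrite /block_pos big_nat_recr.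
- have -> : Negz 0 + 1 = Posz 0 by rewrite NegzE; lia.
  by rewrite /block_pos big_geq // big_nat1 /= addrC subrr.
- have -> : Negz n.+1 + 1 = Negz n by rewrite !NegzE; lia.
  rewrite /block_pos [in RHS]big_nat_recr //= PoszD opprD -addrA.
  by rewrite [X in _ + X]addrC NegzE subrr addr0.
Qed.

Lemma block_pos_unique y (f : int -> int) : f 0 = 0 ->
  (forall l, f (l + 1) = f l + (size (tau (y l)))%:Z) -> f =1 block_pos tau y.
Proof.
move=> f0 fS; elim/int_rect => [|n IH|n IH]; first by rewrite f0 block_pos0.
  by rewrite -addn1 PoszD fS block_posS IH.
have E : - n%:Z = - (n.+1)%:Z + 1 by lia.
by move: IH; rewrite E fS block_posS => /addIr.
Qed.

Lemma block_pos_shift y (c l : int) :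
  block_pos tau (fun l => y (c + l)) l = block_pos tau y (c + l) - block_pos tau y c.
Proof.
symmetry; move: l; apply: block_pos_unique; first by rewrite addr0 subrr.
by move=> l; rewrite addrA block_posS addrAC.
Qed.

Lemma eq_block_pos y y' (n : nat) :
  (forall t : int, - (n.+1)%:Z <= t <= n%:Z -> size (tau (y' t)) = size (tau (y t))) ->
  forall l : int, (`|l| <= n)%N -> block_pos tau y' l = block_pos tau y l.
Proof.
move=> Hsize [d|d] dn /=.
  by congr Posz; apply: eq_big_nat => t /andP [_ td]; rewrite Hsize //; lia.
congr (- Posz _); apply: eq_big_nat => t /andP [t1 td].
by rewrite Hsize //; rewrite NegzE /= in dn; lia.
Qed.

End BlockPositions.

Definition extend_seq {K : Type} (a : K) (b : seq K) (q : int) : K :=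
  if q is Posz n then nth a b n else a.

Lemma block_pos_extend_seq {K : Type} (tau : K -> seq K) a b (q : nat) :
  block_pos tau (extend_seq a b) q = (\sum_(0 <= t < q) size (tau (nth a b t)))%N.
Proof. by []. Qed.

Lemma iter_zshift {K : Type} i (w : int -> K) : iter i zshift w = fun p => w (p + i%:Z).
Proof.
elim: i => [|i IH] /=; first by apply: funext => p; rewrite addr0.
by rewrite IH; apply: funext => p; rewrite /zshift -addrA; congr w; lia.
Qed.

Section Flatten.
Context {K : Type} (x0 : K) (f : K -> seq K).

Lemma size_flatten_map b :
  size (flatten (map f b)) = (\sum_(0 <= t < size b) size (f (nth x0 b t)))%N.
Proof.
elim: b => [|a b IH] /=; first by rewrite big_geq.
by rewrite size_cat big_nat_recl //= IH.
Qed.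

Lemma nth_flatten_map b q j : (q < size b)%N -> (j < size (f (nth x0 b q)))%N ->
  nth x0 (flatten (map f b)) ((\sum_(0 <= t < q) size (f (nth x0 b t))) + j)%N
  = nth x0 (f (nth x0 b q)) j.
Proof.
elim: b q => [|a b IH] [|q] //= qb jq; first by rewrite big_geq // add0n nth_cat jq.
by rewrite big_nat_recl //= nth_cat ltnNge -addnA leq_addr /= addKn; exact: IH.
Qed.

End Flatten.

Section NatSums.
Variable g : nat -> nat.
Local Notation S n := (\sum_(0 <= t < n) g t)%N.

Lemma leq_sum_prefix m n : (m <= n)%N -> (S m <= S n)%N.
Proof. by move=> mn; rewrite (big_cat_nat (leq0n m) mn) leq_addr. Qed.

Lemma sum_prefix_dist M m n : (forall t, (g t <= M)%N) -> (S m <= S n + (m - n) * M)%N.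
Proof.
move=> gM; case: (leqP m n) => [mn|nm].
  exact: leq_trans (leq_sum_prefix mn) (leq_addr _ _).
rewrite (big_cat_nat (leq0n n) (ltnW nm)) leq_add2l.
apply: (@leq_trans (\sum_(n <= t < m) M)%N); first by apply: leq_sum => i _; exact: gM.
by rewrite sum_nat_const_nat.
Qed.

Lemma find_block n P : (P < S n)%N -> exists c, (c < n)%N /\ (S c <= P < S c.+1)%N.
Proof.
elim: n => [|n IH]; first by rewrite big_geq.
rewrite big_nat_recr //= => H.
case: (ltnP P (S n)) => [/IH [c [cn Hc]]|Pn]; first by exists c; split => //; exact: ltnW.
by exists n; rewrite big_nat_recr //= Pn H.
Qed.

Lemma find_central_block M N n L L' :
  (forall t, (g t <= M)%N) -> S n = (L + (2 * (N.+2 * M)).+1 + L')%N ->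
  exists c, [/\ (S c <= L + N.+2 * M < S c.+1)%N, (N < c)%N & (c + N < n)%N].
Proof.
move=> gM Sn; have [c [_ /andP [Sc1 Sc2]]] : exists c, (c < n)%N /\
    (S c <= L + N.+2 * M < S c.+1)%N by apply: find_block; lia.
have gc := gM c; have Sc : S c.+1 = (S c + g c)%N by rewrite big_nat_recr.
exists c; split; first by rewrite Sc1.
- rewrite ltnNge; apply/negP => cN.
  have := sum_prefix_dist c 0 gM; rewrite (@big_geq _ _ _ 0 0) // subn0 => H.
  have : (c * M <= N * M)%N by rewrite leq_mul2r cN orbT.
  lia.
- rewrite ltnNge; apply/negP => nN.
  have H := sum_prefix_dist n c.+1 gM.
  have : ((n - c.+1) * M <= N * M)%N by rewrite leq_mul2r; apply/orP; right; lia.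
  lia.
Qed.

End NatSums.

Lemma size_window {K : Type} (y : int -> K) m L : size (window y m L) = L.
Proof. by rewrite /window size_map size_iota. Qed.

Lemma nth_window {K : Type} x0 (y : int -> K) m L t : (t < L)%N ->
  nth x0 (window y m L) t = y (m + t%:Z).
Proof. by move=> tL; rewrite /window (nth_map 0%N) ?size_iota // nth_iota. Qed.

Lemma window_extend_seq {K : Type} (a : K) b (c n : nat) : (n <= c)%N -> (c + n < size b)%N ->
  window (fun l => extend_seq a b (c%:Z + l)) (- n%:Z) (2 * n).+1
  = take (2 * n).+1 (drop (c - n) b).
Proof.
move=> nc cnb; apply: (@eq_from_nth _ a).
  by rewrite size_window size_takel // size_drop; lia.
move=> t; rewrite size_window => tn; rewrite nth_window // nth_take // nth_drop.
by have -> : c%:Z + (- n%:Z + t%:Z) = Posz (c - n + t)%N by lia.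
Qed.

Section Desubstitution.
Context {R : realType} {K : metricType R} (sigma : K -> seq K)
  (sigma_gs : gen_subst sigma) (k : nat) (z : int -> K) (M : nat)
  (size_le_M : forall a, (size (subst_iter sigma k a) <= M)%N).
Local Notation tau := (subst_iter sigma k).

Definition approx_set (i N : nat) : set (int -> K) := [set y |
  (forall n, (n <= N)%N -> language sigma (window y (- n%:Z) (2 * n).+1)) /\
  forall l : int, (`|l| <= N)%N -> forall j, (j < size (tau (y l)))%N ->
    ball (z (block_pos tau y l + j%:Z - i%:Z)) N.+1%:R^-1 (nth (y l) (tau (y l)) j)].

Lemma approx_set_decr i N N' : (N <= N')%N -> approx_set i N' `<=` approx_set i N.
Proof.
move=> NN' y [Ly Hy]; split => [n nN|l lN j jl]; first exact/Ly/(leq_trans nN).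
apply: le_ball (Hy l (leq_trans lN NN') j jl).
by rewrite lef_pV2 ?posrE ?ltr0n // ler_nat.
Qed.

Lemma extend_seq_approx_set N a b s1 u s2 c :
  let N' := (N.+2 * M)%N in
  let S n := (\sum_(0 <= t < n) size (tau (nth a b t)))%N in
  (forall v, infix v b -> language sigma v) ->
  s1 ++ u ++ s2 = flatten (map tau b) ->
  seq_ball (window z (- N'%:Z) (2 * N').+1) N.+1%:R^-1 u ->
  (S c <= size s1 + N' < S c.+1)%N -> (N < c)%N -> (c + N < size b)%N ->
  approx_set (size s1 + N' - S c) N (fun l => extend_seq a b (c%:Z + l)).
Proof.
move=> N' S Lb Ef zu /andP [Sc1 Sc2] Nc cNb; split => [n nN|l lN j jl].
  rewrite window_extend_seq; try lia.
  by apply: Lb; exact: infix_trans (infix_take _ _) (infix_drop _ _).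
have [q Hq] : exists q : nat, c%:Z + l = q%:Z by exists (absz (c%:Z + l)); lia.
rewrite Hq /= in jl *.
have bpE : block_pos tau (fun l => extend_seq a b (c%:Z + l)) l = (S q)%:Z - (S c)%:Z.
  by rewrite block_pos_shift Hq !block_pos_extend_seq.
have gM t : (size (tau (nth a b t)) <= M)%N by exact: size_le_M.
have SS n : S n.+1 = (S n + size (tau (nth a b n)))%N by rewrite /S big_nat_recr.
have Scq : (S c <= S q + (c - q) * M)%N := sum_prefix_dist c q gM.
have Sqc : (S q.+1 <= S c.+1 + (q.+1 - c.+1) * M)%N := sum_prefix_dist q.+1 c.+1 gM.
have : ((c - q) * M <= N * M)%N /\ ((q.+1 - c.+1) * M <= N * M)%N.
  by rewrite !leq_mul2r; split; apply/orP; right; lia.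
move: (SS q) (SS c) (gM c) => Sq Sc gc [cqM qcM].
have qb : (q < size b)%N by lia.
have N'E : N' = (N * M + 2 * M)%N by rewrite /N' !mulSn; lia.
(* [r] is the position in [u] of the letter [j] of the block [q]. *)
pose r := (S q + j - size s1)%N.
have rN : (r < (2 * N').+1)%N by rewrite /r; lia.
have ur : nth a u r = nth a (tau (nth a b q)) j.
  rewrite -nth_flatten_map // -/(S q) -Ef nth_cat ifN; last by lia.
  by rewrite nth_cat -(seq_ball_size zu) size_window -/r rN.
have [_ zuP] := (seq_ballP _ _ _).1 zu.
have := zuP r a a; rewrite size_window nth_window // ur => /(_ rN).
rewrite (set_nth_default a (nth a b q)) //; congr (ball (z _) _ _).
by rewrite bpE /r; lia.
Qed.

Context (sigma_prim : primitive sigma) (z_sub : subshift sigma z).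

Lemma approx_set_ne N : exists2 i, (i < M)%N & approx_set i N !=set0.
Proof.
pose N' := (N.+2 * M)%N.
have r_gt0 : 0 < N.+1%:R^-1 :> R by rewrite invr_gt0 ltr0n.
have [j [a [u [kj iu zu]]]] := language_deep sigma_gs sigma_prim (z_sub N') k r_gt0.
pose b := subst_iter sigma (j - k) a.
have Lb v : infix v b -> language sigma v by exact: infix_language.
move: iu; rewrite -(subnKC kj) subst_iterD -/b => /infixP [s1 [s2 Ef]].
pose S n := (\sum_(0 <= t < n) size (tau (nth a b t)))%N.
have gM t : (size (tau (nth a b t)) <= M)%N by exact: size_le_M.
have Sb : S (size b) = (size s1 + (2 * N').+1 + size s2)%N.
  by rewrite /S -size_flatten_map Ef !size_cat -(seq_ball_size zu) size_window addnA.
have [c [Sc Nc cNb]] := find_central_block gM Sb.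
exists (size s1 + N' - S c)%N.
  have : S c.+1 = (S c + size (tau (nth a b c)))%N by rewrite /S big_nat_recr.
  by move: (gM c) Sc; rewrite -/(S c) -/(S c.+1) -/N'; lia.
by eexists; exact: extend_seq_approx_set Lb (esym Ef) zu Sc Nc cNb.
Qed.

End Desubstitution.

Section IntFunctions.
Context {T : topologicalType}.

Lemma compact_int_fun : compact [set: T] -> compact [set: int -> T].
Proof.
move=> cT; have := @tychonoff int (fun _ => T) (fun _ => setT) (fun _ => cT).
by congr compact; apply/seteqP; split.
Qed.

Lemma near_coords (y : int -> T) (A : int -> set T) (n : nat) :
  (forall t, nbhs (y t) (A t)) ->
  \forall y' \near y, forall t : int, - (n.+1)%:Z <= t <= n%:Z -> A t (y' t).
Proof.
move=> yA; pose t_ (s : nat) := - (n.+1)%:Z + s%:Z.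
have H : \forall y' \near y, forall s, (s < n.+1 + n.+1)%N -> A (t_ s) (y' (t_ s)).
  apply: (@near_forall_ltn _ (nbhs y) (nbhs_filter y)) => s _.
  exact: (@proj_continuous int (fun _ => T) _ y _ (yA _)).
apply: filterS H => y' Hy' t /andP [t1 t2].
have -> : t = t_ (absz (t + (n.+1)%:Z)) by rewrite /t_; lia.
by apply: Hy'; lia.
Qed.

End IntFunctions.

Lemma forall_ball_eq {R : realType} {K : metricType R} (x x' : K) :
  (forall e : R, 0 < e -> ball x e x') -> x = x'.
Proof.
move=> H; apply: mdist_positivity; apply/eqP; rewrite eq_le mdist_ge0 andbT.
by rewrite leNgt; apply/negP => d0; have := H _ d0; rewrite ballEmdist /= ltxx.
Qed.

Section Limit.
Context {R : realType} {K : metricType R} (sigma : K -> seq K)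
  (sigma_gs : gen_subst sigma) (sigma_prim : primitive sigma) (k : nat) (z : int -> K)
  (z_sub : subshift sigma z) (M : nat)
  (size_le_M : forall a, (size (subst_iter sigma k a) <= M)%N).
Local Notation tau := (subst_iter sigma k).

Lemma approx_set_ne_forall :
  exists i, (i < M)%N /\ forall N, approx_set sigma k z i N !=set0.
Proof.
apply: contrapT => /forallNP empty_some.
have Hi (i : 'I_M) : exists N, ~ (approx_set sigma k z i N !=set0).
  by have /not_andP [/(_ (ltn_ord i))|/existsNP] := empty_some i.
have [f Hf] := choice Hi.
have [i iM [y Hy]] := approx_set_ne sigma_gs size_le_M sigma_prim z_sub (\max_(t < M) f t)%N.
apply: (Hf (Ordinal iM)); exists y; apply: approx_set_decr Hy.
exact: leq_bigmax.
Qed.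

Section ClusterPoint.
Variables (i : nat) (y : int -> K).
Hypothesis y_cluster :
  forall N (B : set (int -> K)), nbhs y B -> approx_set sigma k z i N `&` B !=set0.

Lemma cluster_approx n e : 0 < e -> exists y', approx_set sigma k z i n y' /\
  forall t : int, - (n.+1)%:Z <= t <= n%:Z ->
    ball (y t) e (y' t) /\ seq_ball (tau (y t)) e (tau (y' t)).
Proof.
move=> e0.
have near_y t : nbhs (y t) (fun b => ball (y t) e b /\ seq_ball (tau (y t)) e (tau b)).
  exact: filterI (nbhsx_ballx _ _ e0) (subst_iter_nbhs sigma_gs k _ e0).
by have [y' [Ay' By']] := y_cluster n (near_coords n near_y); exists y'.
Qed.

Lemma cluster_subshift : subshift sigma y.
Proof.
move=> n; apply: language_closed => e e0.
have [y' [[Ly' _] Hb]] := cluster_approx n e0.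
exists (window y' (- n%:Z) (2 * n).+1); split; first exact: Ly' n (leqnn n).
apply/seq_ballP; split => [|t x0 y0]; first by rewrite !size_window.
by rewrite size_window => tn; rewrite !nth_window //; apply: (Hb _ _).1; lia.
Qed.

Lemma cluster_subst_seq : subst_seq tau y (fun p => z (p - i%:Z)).
Proof.
move=> l j jl /=; apply: forall_ball_eq => e e0.
have e20 : 0 < e / 2 by rewrite divr_gt0.
pose N := maxn `|l|%N (Num.truncn (e / 2)^-1).
have lN : (`|l| <= N)%N by rewrite leq_maxl.
have rN : N.+1%:R^-1 <= e / 2.
  rewrite -[e / 2]invrK lef_pV2 ?posrE ?ltr0n ?invr_gt0 //.
  apply/ltW/(lt_le_trans (truncnS_gt _)).
  by rewrite ler_nat ltnS leq_maxr.
have [y' [[_ z_near] Hb]] := cluster_approx N e20.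
have bpE := eq_block_pos (fun t ht => esym (seq_ball_size (Hb t ht).2)) lN.
have /seq_ballP [sz yy'] := (Hb l ltac:(lia)).2.
have := z_near l lN j ltac:(by rewrite -sz); rewrite bpE => z_y'.
have := ball_triangle z_y' (ball_sym (yy' j (y l) (y' l) jl)); apply: le_ball.
by rewrite [e in _ <= e]splitr lerD2r.
Qed.

End ClusterPoint.

Lemma desubstitution : compact [set: K] -> exists (i : nat) (y : int -> K),
  subshift sigma y /\ subst_seq tau y (fun p => z (p - i%:Z)).
Proof.
move=> cK; have [i [iM ne]] := approx_set_ne_forall.
have [y Hy] := compact_nested_cluster (compact_int_fun cK)
  (fun n m nm => @approx_set_decr _ _ sigma k z i _ _ nm) ne.
by exists i, y; split; [exact: cluster_subshift Hy | exact: cluster_subst_seq Hy].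
Qed.

End Limit.

Lemma window_shift {K : Type} (w : int -> K) c m L :
  window (fun p => w (p + c)) m L = window w (m + c) L.
Proof. by apply: eq_map => t; rewrite addrAC. Qed.

Lemma concat_of_words_shift {K : Type} (sigma : K -> seq K) k i w :
  concat_of_words sigma k w -> concat_of_words sigma k (iter i zshift w).
Proof.
move=> [m [m_incr m_words]]; rewrite iter_zshift.
exists (fun l => m l - i%:Z); split => [l|l]; first by have := m_incr l; lia.
have [a Ha] := m_words l; exists a; rewrite window_shift subrK.
by have -> : m (l + 1) - i%:Z - (m l - i%:Z) = m (l + 1) - m l by lia.
Qed.

Lemma subst_seq_concat_of_words {K : Type} (sigma : K -> seq K) k y w :
  (forall a, 0 < size (sigma a))%N ->
  subst_seq (subst_iter sigma k) y w -> concat_of_words sigma k w.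
Proof.
move=> sigma_gt0 yw; exists (block_pos (subst_iter sigma k) y); split => l.
  by have := size_subst_iter_gt0 k (y l) sigma_gt0; rewrite block_posS; lia.
exists (y l); rewrite block_posS addrAC subrr add0r /=.
apply: (@eq_from_nth _ (y l)) => [|t]; first by rewrite size_window.
by rewrite size_window => tl; rewrite nth_window // yw.
Qed.

Unset Implicit Arguments.

Theorem mainTheorem19 (R : realType) (K : metricType R) (sigma : K -> seq K) :
  alphabet_space K -> gen_subst sigma -> primitive sigma ->
  forall (z : int -> K) (k : nat), subshift sigma z ->
    concat_of_words sigma k z /\
    exists (i : nat) (y w : int -> K),
      [/\ subshift sigma y, subst_seq (subst_iter sigma k) y w &
          z = iter i zshift w].
Proof.
move=> [cK _ _] sigma_gs sigma_prim z k z_sub.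
have [M size_le_M] := subst_iter_size_bounded k sigma_gs cK.
have [i [y [y_sub yz]]] := desubstitution sigma_gs sigma_prim z_sub size_le_M cK.
have z_shift : z = iter i zshift (fun p => z (p - i%:Z)).
  by rewrite iter_zshift; apply: funext => p; rewrite addrK.
split; last by exists i, y, (fun p => z (p - i%:Z)).
have [sigma_gt0 _ _] := sigma_gs.
by rewrite z_shift; apply/concat_of_words_shift/(subst_seq_concat_of_words sigma_gt0 yz).
Qed.
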